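(* Let $M\in\mathbb N$, let $X(M)$ be the subshift defined below and let $E$ be its code defined below. Then the generating function $f(E,z)=\sum_{u\in E}z^{|u|}$ equals $\frac12\left(1-\sqrt{1-8Mz^2}\right)$.
   Context: Let $\Sigma_1=\{\lambda,\xi,\rho_1,\dots,\rho_M,\eta_1,\dots,\eta_M\}$. $\mathcal M_1(M)$ is the monoid with zero generated by $\Sigma_1$ and an identity $\mathbf 1$, subject only to the relations $\lambda\rho_i=\mathbf 1$, $\lambda\eta_i=0$, $\xi\eta_i=\mathbf 1$, $\xi\rho_i=0$ ($1\le i\le M$), $\mathbf 1$ is the identity and $0$ is absorbing; no other relations. $\mathit{red}:\Sigma_1^*\to\mathcal M_1(M)$ sends a word to the product of its letters (empty word to $\mathbf 1$). $X(M)=\{x\in\Sigma_1^{\mathbb Z}:\mathit{red}(x_i\cdots x_j)\neq 0\ \forall i\le j\}$. The code $E$ is the set of blocks $w$ of $X(M)$ of the form $w=avb$ with $a\in\{\lambda,\xi\}$, $b\in\{\rho_1,\dots,\rho_M,\eta_1,\dots,\eta_M\}$, $\mathit{red}(ab)=\mathbf 1$, and $v$ a word with $\mathit{red}(v)=\mathbf 1$. $|u|$ is the length of $u$; the generating function is a formal power series. *)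

From HB Require Import structures.
From mathcomp Require Import all_boot all_order all_algebra.
From mathcomp Require Import boolp.
Set Implicit Arguments. Unset Strict Implicit. Unset Printing Implicit Defensive.
Import Order.TTheory GRing.Theory Num.Theory.

(* The alphabet Sigma_1 = {lambda, xi, rho_1..rho_M, eta_1..eta_M};
   indices 1..M are represented by 'I_M. *)
Inductive letter (M : nat) : Type :=
| Lam | Xi | Rho of 'I_M | Eta of 'I_M.
Arguments Lam {M}. Arguments Xi {M}.

Definition letter_code M (a : letter M) : (bool + (bool * 'I_M))%type :=
  match a with
  | Lam => inl true | Xi => inl false
  | Rho i => inr (true, i) | Eta i => inr (false, i) end.
Definition letter_decode M (c : (bool + (bool * 'I_M))%type) : letter M :=
  match c with
  | inl true => Lam | inl false => Xi
  | inr (true, i) => Rho i | inr (false, i) => Eta i end.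
Lemma letter_codeK M : cancel (@letter_code M) (@letter_decode M).
Proof. by case. Qed.
HB.instance Definition _ M := Equality.copy (letter M) (can_type (@letter_codeK M)).
HB.instance Definition _ M := Countable.copy (letter M) (can_type (@letter_codeK M)).
HB.instance Definition _ M := Finite.copy (letter M) (can_type (@letter_codeK M)).

(* The monoid with zero M_1(M) presented by generators Sigma_1, identity 1,
   an absorbing zero, and the relations
     lambda rho_i = 1, lambda eta_i = 0, xi eta_i = 1, xi rho_i = 0.
   Elements of the free monoid with zero are represented by
   option (seq letter): [Some w] is the word w, [None] is the zero. *)
Definition rel_one M (a b : letter M) : bool :=
  match a, b with Lam, Rho _ => true | Xi, Eta _ => true | _, _ => false end.
Definition rel_zero M (a b : letter M) : bool :=
  match a, b with Lam, Eta _ => true | Xi, Rho _ => true | _, _ => false end.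

Inductive mstep M : option (seq (letter M)) -> option (seq (letter M)) -> Prop :=
| mstep_one u v a b : rel_one a b -> mstep (Some (u ++ [:: a; b] ++ v)) (Some (u ++ v))
| mstep_zero u v a b : rel_zero a b -> mstep (Some (u ++ [:: a; b] ++ v)) None.

Inductive mcong M : option (seq (letter M)) -> option (seq (letter M)) -> Prop :=
| mcong_step x y : mstep x y -> mcong x y
| mcong_refl x : mcong x x
| mcong_sym x y : mcong x y -> mcong y x
| mcong_trans x y z : mcong x y -> mcong y z -> mcong x z.

Definition red_is_zero M (w : seq (letter M)) : Prop := mcong (Some w) None.
Definition red_is_one M (w : seq (letter M)) : Prop := mcong (Some w) (Some [::]).

Definition factor M (x : int -> letter M) (i : int) (n : nat) : seq (letter M) :=
  mkseq (fun k => x (i + k%:Z)%R) n.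

(* X(M): red(x_i ... x_j) <> 0 for all i <= j, i.e. for all factors of
   length j - i + 1 >= 1 *)
Definition in_XM M (x : int -> letter M) : Prop :=
  forall (i : int) (n : nat), ~ red_is_zero (factor x i n.+1).

Definition is_block M (w : seq (letter M)) : Prop :=
  exists x, in_XM x /\ exists i : int, w = factor x i (size w).

Definition is_opener M (a : letter M) : bool :=
  match a with Lam | Xi => true | _ => false end.
Definition is_closer M (b : letter M) : bool :=
  match b with Rho _ | Eta _ => true | _ => false end.

Definition in_E M (w : seq (letter M)) : Prop :=
  is_block w /\
  exists (a : letter M) (v : seq (letter M)) (b : letter M),
    [/\ w = a :: rcons v b, is_opener a, is_closer b,
        red_is_one [:: a; b] & red_is_one v].

Definition fps := nat -> rat.
Definition fps_mul (s t : fps) : fps :=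
  fun n => (\sum_(k < n.+1) s k * t (n - k)%N)%R.

(* generating function f(E,z) = sum_{u in E} z^|u| : its n-th coefficient
   is the number of words of length n in E *)
Definition genfun_E M : fps :=
  fun n => ((#|[set t : n.-tuple (letter M) | `[< in_E (tval t) >] ]|)%:R)%R.

Definition one_minus_8Mz2 (M : nat) : fps :=
  fun n => if n == 0%N then 1%R else if n == 2%N then (- (8 * M)%:R)%R else 0%R.

From HB Require Import structures.
From mathcomp Require Import all_boot all_order all_algebra.
From mathcomp Require Import boolp zify ring.
Import Order.TTheory GRing.Theory Num.Theory.
Set Implicit Arguments. Unset Strict Implicit. Unset Printing Implicit Defensive.

(* A word reduces to 1 in M_1(M) exactly when it is a Dyck word for the
   bracket pairs (lambda, rho_i) and (xi, eta_i): a stack machine computes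
   normal forms, which are invariant under the defining congruence.  A
   nonempty Dyck word is a block of X(M), namely of its periodic extension, so
   E is the set of words a v b with (a, b) one of the 2M bracket pairs and v a
   Dyck word.  Cutting a Dyck word at its first return to the empty stack gives
   D = 1 + E D, and E = 2M z^2 D; hence E = 2M z^2 + E^2, that is,
   (1 - 2E)^2 = 1 - 8M z^2. *)

Lemma size_flatten_nseq (T : Type) (s : seq T) K :
  size (flatten (nseq K s)) = K * size s.
Proof. by rewrite size_flatten /shape map_nseq sumn_nseq mulnC. Qed.

Lemma nth_flatten_nseq (T : Type) (x0 : T) s K k : k < K * size s ->
  nth x0 (flatten (nseq K s)) k = nth x0 s (k %% size s).
Proof.
elim: K k => [//|K IHK] k /=; rewrite mulSn nth_cat => kK.
case: ltnP => [ks|sk]; first by rewrite modn_small.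
by rewrite IHK ?ltn_subLR // -{2}(subnK sk) modnDr.
Qed.

Lemma absz_modzDn (m k : nat) (i : int) : 0 < m ->
  absz ((i + k%:Z)%R %% m%:Z)%Z = (absz (i %% m%:Z)%Z + k) %% m.
Proof.
move=> m0; have /gez0_abs ei : (0 <= (i %% m%:Z)%Z)%R by rewrite modz_ge0 // -lt0n.
by rewrite -modzDml -ei -PoszD modz_nat.
Qed.

Lemma count_sum (T : Type) (P : pred T) s : count P s = \sum_(x <- s) P x.
Proof. by rewrite -sum1_count big_mkcond. Qed.

Section Words.
Variable M : nat.
Notation L := (letter M).
Implicit Types (a b c : L) (u v w p q r s t : seq L) (x y : option (seq L)).

Lemma rel_one_opener_closer a b : rel_one a b -> is_opener a && is_closer b.
Proof. by case: a; case: b. Qed.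

Lemma is_openerN c : is_opener c = ~~ is_closer c.
Proof. by case: c. Qed.

(* A stack machine computing normal forms in M_1(M): the stack holds the
   reduced word reversed, and [None] stands for the zero. *)
Definition nf_step x c : option (seq L) :=
  match x with
  | Some (a :: r) =>
      if is_opener a && is_closer c then (if rel_one a c then Some r else None)
      else Some [:: c, a & r]
  | Some [::] => Some [:: c]
  | None => None
  end.

Definition nf x : option (seq L) :=
  if x is Some w then foldl nf_step (Some [::]) w else None.

Lemma foldl_nf_step_None w : foldl nf_step None w = None.
Proof. by elim: w. Qed.

Lemma mstep_nf x y : mstep x y -> nf x = nf y.
Proof.
case=> u v a b ab /=; rewrite !foldl_cat;
  case: (foldl nf_step (Some [::]) u) => [r|]; rewrite ?foldl_nf_step_None //.
  by case: a ab => [||i|i]; case: b => [||j|j] //= _; case: r => //= *; rewrite andbF.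
by case: a ab => [||i|i]; case: b => [||j|j] //= _; case: r => [|? ?];
  rewrite /= ?andbF /= foldl_nf_step_None.
Qed.

Lemma mcong_nf x y : mcong x y -> nf x = nf y.
Proof. by elim=> [? ? /mstep_nf|||? ? ? _ -> _ ->]. Qed.

Lemma mcong_context p q x y :
  mcong x y -> mcong (omap (fun w => p ++ w ++ q) x) (omap (fun w => p ++ w ++ q) y).
Proof.
elim=> {x y} [x y []|x|x y _|x y z _ xy _]; last 3 first.
- exact: mcong_refl.
- exact: mcong_sym.
- exact: mcong_trans.
- by move=> u v a b ab /=; rewrite -!catA !(catA p); apply/mcong_step/mstep_one.
by move=> u v a b ab /=; rewrite -!catA (catA p); apply/mcong_step/mstep_zero.
Qed.

(* The Dyck automaton: the stack holds the pending openers, innermost first. *)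
Definition dyck_step x c : option (seq L) :=
  match x with
  | Some r => if is_opener c then Some (c :: r)
              else if r is a :: r' then (if rel_one a c then Some r' else None)
              else None
  | None => None
  end.

Definition dyck_run r w := foldl dyck_step (Some r) w.
Definition dyck w := dyck_run [::] w == Some [::].

Lemma foldl_dyck_step_None w : foldl dyck_step None w = None.
Proof. by elim: w. Qed.

(* A closer on the stack of the normal-form machine is never removed. *)
Lemma nf_run_has_closer r w :
  has (@is_closer M) r -> foldl nf_step (Some r) w != Some [::].
Proof.
elim: w r => [|c w IHw] [|a r] //= rc.
case: ifP => [/andP[oa _]|_]; last by rewrite IHw //= orbC rc.
case: ifP => _; last by rewrite foldl_nf_step_None.
by case: a oa rc => //= _ rc; apply: IHw.
Qed.

Lemma nf_run_dyck_run r w :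
  foldl nf_step (Some r) w = Some [::] -> dyck_run r w = Some [::].
Proof.
elim: w r => [|c w IHw] r //=; rewrite /dyck_run /= is_openerN.
case cc: (is_closer c) => /=; last by case: r => [|a r] /=; rewrite ?cc ?andbF; apply: IHw.
case: r => [|a r] /=.
  by move=> e; have := @nf_run_has_closer [:: c] w; rewrite e /= cc => /(_ isT).
case: (is_opener a) => /=.
  by case: (rel_one a c); [apply: IHw | rewrite foldl_nf_step_None].
by move=> e; have := @nf_run_has_closer [:: c, a & r] w; rewrite e /= cc => /(_ isT).
Qed.

Lemma dyck_run_mcong r w :
  dyck_run r w = Some [::] -> mcong (Some (rev r ++ w)) (Some [::]).
Proof.
elim: w r => [|c w IHw] r; first by case=> ->; apply: mcong_refl.
rewrite /dyck_run /=; case: ifP => _; first by move/IHw; rewrite rev_cons cat_rcons.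
case: r => [|a r]; first by rewrite foldl_dyck_step_None.
case ac: (rel_one a c); last by rewrite foldl_dyck_step_None.
move/IHw; apply: mcong_trans; apply: mcong_step.
by rewrite rev_cons -cats1 -catA; apply: mstep_one.
Qed.

Lemma red_is_oneP w : reflect (red_is_one w) (dyck w).
Proof. by apply: (iffP eqP) => [/dyck_run_mcong|/mcong_nf/nf_run_dyck_run]. Qed.

Lemma dyck_infix_red_nonzero f w : dyck w -> infix f w -> ~ red_is_zero f.
Proof.
move=> /red_is_oneP w1 /infixP[p [q ew]] /(mcong_context p q); rewrite /= -ew => w0.
by have := mcong_nf (mcong_trans (mcong_sym w0) w1).
Qed.

Lemma dyck_run_catr r s t w :
  dyck_run r w = Some s -> dyck_run (r ++ t) w = Some (s ++ t).
Proof.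
elim: w r => [|c w IHw] r; first by case=> ->.
rewrite /dyck_run /=; case: ifP => _; first exact: (IHw (c :: r)).
case: r => [|a r] /=; first by rewrite foldl_dyck_step_None.
by case: ifP => _; [apply: IHw | rewrite foldl_dyck_step_None].
Qed.

Lemma dyck_cat u v : dyck u -> dyck v -> dyck (u ++ v).
Proof. by rewrite /dyck /dyck_run foldl_cat => /eqP ->. Qed.

Lemma dyck_run_match_bottom r a w : dyck_run (rcons r a) w = Some [::] ->
  exists p b q, [/\ w = p ++ b :: q, dyck_run r p = Some [::], rel_one a b & dyck q].
Proof.
elim: w r => [|c w IHw] r; first by case: r.
rewrite /dyck_run /=; case: ifP => oc.
  move/(IHw (c :: r)) => [p [b [q [-> rp ab dq]]]].
  by exists (c :: p), b, q; rewrite /dyck_run /= oc.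
case: r => [|d r] /=; case: ifP => dc; rewrite ?foldl_dyck_step_None //.
  by move=> dw; exists [::], c, w; split=> //; apply/eqP.
move/IHw => [p [b [q [-> rp ab dq]]]].
by exists (c :: p), b, q; rewrite /dyck_run /= oc dc.
Qed.

Lemma dyck_cons_split c w : dyck (c :: w) ->
  exists p b q, [/\ w = p ++ b :: q, rel_one c b, dyck p & dyck q].
Proof.
rewrite /dyck /dyck_run /=; case: ifP => _; last by rewrite foldl_dyck_step_None.
by move=> /eqP /(dyck_run_match_bottom (r := [::])) [p [b [q [-> /eqP]]]]; exists p, b, q.
Qed.

Lemma dyck_prefix_consN a p t : dyck (p ++ t) -> ~~ dyck (a :: p).
Proof.
rewrite /dyck /dyck_run foldl_cat /=.
case ep: (foldl _ _ p) => [s|]; last by rewrite foldl_dyck_step_None.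
case: ifP => _ _; last by rewrite foldl_dyck_step_None.
by have := dyck_run_catr [:: a] ep; rewrite /dyck_run /= => ->; case: s {ep}.
Qed.

Definition code_word w :=
  if w is a :: c :: t then rel_one a (last c t) && dyck (belast c t) else false.

Lemma code_word_cons_rcons a v b : code_word (a :: rcons v b) = rel_one a b && dyck v.
Proof. by case: v => [|c v] /=; rewrite ?last_rcons ?belast_rcons. Qed.

Lemma code_wordP w :
  reflect (exists a v b, [/\ w = a :: rcons v b, rel_one a b & dyck v]) (code_word w).
Proof.
apply: (iffP idP) => [|[a [v [b [-> ab dv]]]]]; last by rewrite code_word_cons_rcons ab.
case: w => [|a [|c t]] //= /andP[ab dv].
by exists a, (belast c t), (last c t); rewrite -lastI.
Qed.

Lemma code_word_dyck w : code_word w -> dyck w.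
Proof.
case/code_wordP=> [a [v [b [-> ab /eqP dv]]]].
have /andP[oa cb] := rel_one_opener_closer ab.
rewrite /dyck /dyck_run /= oa -cats1 foldl_cat.
have := dyck_run_catr [:: a] dv; rewrite /dyck_run /= => -> /=.
by rewrite is_openerN cb ab.
Qed.

Lemma code_word_prefix u t : code_word u -> code_word (u ++ t) -> t = [::].
Proof.
move=> cu; have /code_wordP[a [v [b [eu _ _]]]] := cu.
case/code_wordP=> [a' [v' [b' []]]]; case/lastP: t => [//|t z].
rewrite -rcons_cat -(rcons_cons a' v' b') => /rcons_inj[ev' _] _.
move: ev'; rewrite eu => -[_ <-] /(dyck_prefix_consN a).
by rewrite -eu code_word_dyck.
Qed.

Lemma code_word_take_inj w i j : i <= size w -> j <= size w ->
  code_word (take i w) -> code_word (take j w) -> i = j.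
Proof.
wlog ij : i j / i <= j => [hwlog iw jw ci cj|iw jw ci cj].
  by case: (leqP i j) => [|/ltnW] ij; [|apply/esym]; apply: hwlog.
have ew : take i w ++ drop i (take j w) = take j w.
  by rewrite -{1}(take_takel w ij) cat_take_drop.
have t0 : drop i (take j w) = [::] by apply: (code_word_prefix ci); rewrite ew.
by move: (congr1 size ew); rewrite t0 cats0 !size_takel.
Qed.

Lemma dyck_first_return w : dyck w =
  (w == [::]) + \sum_(k < (size w).+1) (code_word (take k w) && dyck (drop k w)) :> nat.
Proof.
case: w => [|c w]; first by rewrite big_ord_recl big_ord0.
rewrite add0n; case dw: (dyck (c :: w)); last first.
  rewrite big1 // => k _; case: andP => // -[ck dk].
  by move: dw; rewrite -(cat_take_drop k (c :: w)) (dyck_cat (code_word_dyck ck) dk).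
have [p [b [q [-> cb dp dq]]]] := dyck_cons_split dw.
rewrite -cat_rcons -cat_cons; set u := c :: rcons p b.
have su : size u = (size p).+2 by rewrite /= size_rcons.
have cu : code_word u by apply/code_wordP; exists c, p, b.
have k0 : size u < (size (u ++ q)).+1 by rewrite ltnS size_cat leq_addr.
apply/esym/eqP/sum_nat_eq1; exists (Ordinal k0); split=> // [|j ji _].
  by rewrite take_size_cat // drop_size_cat // cu dq.
case: andP => // -[cj _]; case/eqP: ji; apply/val_inj/(code_word_take_inj _ _ cj) => //.
  by rewrite -ltnS.
by rewrite take_size_cat.
Qed.

(* Every factor of the periodic extension of [w] is an infix of a power of [w]. *)
Lemma dyck_block w : dyck w -> w != [::] -> is_block w.
Proof.
case: w => [//|c w0] dw _; set w := c :: w0.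
have dwK K : dyck (flatten (nseq K w)) by elim: K => [//|K] /(dyck_cat dw).
pose x i := nth c w (absz (i %% size w)%Z).
have fx i n : let j := absz (i %% size w)%Z in
    factor x i n = take n (drop j (flatten (nseq (j + n) w))).
  move=> j; have w_gt0 : 0 < size w by [].
  apply: (@eq_from_nth _ c) => [|k].
    by rewrite size_mkseq size_takel // size_drop size_flatten_nseq leq_subRL; nia.
  rewrite size_mkseq => kn; rewrite nth_mkseq // nth_take // nth_drop.
  by rewrite nth_flatten_nseq /x ?absz_modzDn //; nia.
exists x; split.
  move=> i n; apply: (dyck_infix_red_nonzero (dwK _)); rewrite fx /=.
  set j := absz _; set V := flatten _; apply/infixP.
  by exists (take j V), (drop n.+1 (drop j V)); rewrite !cat_take_drop.
by exists 0%R; rewrite fx /= take_size_cat.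
Qed.

Lemma dyck_pair a b : dyck [:: a; b] = rel_one a b.
Proof. by case: a; case: b. Qed.

Lemma in_E_code_word w : in_E w <-> code_word w.
Proof.
split=> [[_ [a [v [b [-> _ _ /red_is_oneP ab /red_is_oneP dv]]]]]|cw].
  by apply/code_wordP; exists a, v, b; rewrite -dyck_pair.
split; first by apply: dyck_block; [exact: code_word_dyck | case: w cw].
have /code_wordP[a [v [b [-> ab dv]]]] := cw.
have /andP[oa cb] := rel_one_opener_closer ab.
by exists a, v, b; split=> //; apply/red_is_oneP; rewrite ?dyck_pair.
Qed.

Fixpoint words n : seq (seq L) :=
  if n is n'.+1 then [seq c :: w | c <- enum {: L}, w <- words n'] else [:: [::]].

Lemma mem_words n w : (w \in words n) = (size w == n).
Proof.
elim: n w => [|n IHn] [|c w] //=; first by apply/negbTE/allpairsP => -[[? ?] [_ _]].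
rewrite eqSS -IHn; apply/allpairsP/idP => [[[? ?] [_ ? [_ ->]]] //|wn].
by exists (c, w); rewrite mem_enum.
Qed.

Lemma uniq_words n : uniq (words n).
Proof.
elim: n => [//|n IHn] /=; apply: allpairs_uniq => //; first exact: enum_uniq.
by move=> [? ?] [? ?] _ _ /= [-> ->].
Qed.

Lemma count_words_cons (P : pred (seq L)) n :
  count P (words n.+1) = \sum_c count (fun w => P (c :: w)) (words n).
Proof.
rewrite /= -big_enum; elim: (enum _) => [|c s IHs]; first by rewrite big_nil.
by rewrite big_cons /= count_cat count_map IHs.
Qed.

Lemma count_words_split k m (P Q : pred (seq L)) :
  count (fun w => P (take k w) && Q (drop k w)) (words (k + m)) =
  count P (words k) * count Q (words m).
Proof.
elim: k P => [|k IHk] P.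
  under eq_count => w do rewrite take0 drop0.
  by rewrite add0n /=; case: (P [::]); rewrite ?mul1n ?mul0n // count_pred0.
by rewrite addSn !count_words_cons big_distrl; apply: eq_bigr => c _; apply: IHk.
Qed.

Lemma card_tuples_count n (P : pred (seq L)) :
  #|[set t : n.-tuple L | P t]| = count P (words n).
Proof.
rewrite cardsE cardE /enum_mem size_filter /= -(count_map val P).
set s := map _ _; suff /permP -> : perm_eq s (words n) by [].
apply: uniq_perm; rewrite ?uniq_words ?map_inj_uniq ?index_enum_uniq //.
  exact: val_inj.
move=> w; rewrite mem_words; apply/mapP/idP => [[t _ ->]|wn]; first by rewrite size_tuple.
by exists (Tuple wn); rewrite ?mem_index_enum.
Qed.

Definition ndyck n := count dyck (words n).
Definition ncode n := count code_word (words n).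

Lemma ndyck_rec n : ndyck n = (n == 0) + \sum_(k < n.+1) ncode k * ndyck (n - k).
Proof.
rewrite /ndyck count_sum (eq_big_seq (fun w =>
  (w == [::]) + \sum_(k < n.+1) (code_word (take k w) && dyck (drop k w)))); last first.
  by move=> w; rewrite mem_words => /eqP <-; apply: dyck_first_return.
rewrite big_split /= exchange_big /= -count_sum count_uniq_mem ?uniq_words //.
rewrite mem_words eq_sym.
congr (_ + _); apply: eq_bigr => k _.
by rewrite -count_sum -count_words_split subnKC // -ltnS.
Qed.

Lemma ncode_lt2 n : n < 2 -> ncode n = 0.
Proof. by case: n => [|[|]] // _; rewrite /ncode ?count_words_cons ?big1. Qed.

Lemma sum_letters (F : L -> nat) :
  \sum_a F a = F Lam + F Xi + (\sum_(i < M) F (Rho i) + \sum_(i < M) F (Eta i)).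
Proof.
rewrite (reindex (@letter_decode M)); last first.
  by apply: onW_bij; exists (@letter_code M); [case=> [[]|[[] i]] | exact: letter_codeK].
rewrite big_sumType /= big_bool /=.
rewrite (eq_bigr (fun p : bool * 'I_M => F (letter_decode (inr (p.1, p.2))))); last by case.
rewrite -(pair_bigA _ (fun (o : bool) (i : 'I_M) => F (letter_decode (inr (o, i))))).
by rewrite /= big_bool addnA.
Qed.

Lemma card_rel_one : \sum_(a : L) \sum_(b : L) (rel_one a b : nat) = 2 * M.
Proof. by rewrite !sum_letters /= !big1_eq sum1_card card_ord; lia. Qed.

Lemma ncode_rec n : ncode n.+2 = 2 * M * ndyck n.
Proof.
rewrite /ncode count_words_cons -card_rel_one big_distrl; apply: eq_bigr => a _.
rewrite -[n.+1]addn1 (eq_in_count (a2 := fun w =>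
  dyck (take n w) && rel_one a (last a (drop n w)))).
  rewrite (count_words_split n 1 dyck (fun u => rel_one a (last a u))) mulnC.
  by rewrite count_words_cons; congr (_ * _); apply: eq_bigr => b _ /=; rewrite addn0.
move=> w; rewrite mem_words addn1 => /eqP.
case/lastP: w => [//|v b]; rewrite size_rcons => -[sv].
by rewrite code_word_cons_rcons -cats1 take_size_cat ?drop_size_cat // andbC.
Qed.

Lemma ncode_conv n : ncode n = 2 * M * (n == 2) + \sum_(k < n.+1) ncode k * ncode (n - k).
Proof.
case: n => [|[|n]]; first by rewrite big_ord1 /= !ncode_lt2 // muln0.
  by rewrite !big_ord_recr big_ord0 /= !ncode_lt2 // muln0.
have -> : \sum_(k < n.+3) ncode k * ncode (n.+2 - k) =
          \sum_(k < n.+1) ncode k * ncode (n.+2 - k).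
  rewrite big_ord_recr [in LHS]big_ord_recr /= subnn subSnn.
  by rewrite (ncode_lt2 (n := 0)) // (ncode_lt2 (n := 1)) // !muln0 !addn0.
rewrite ncode_rec ndyck_rec mulnDr eqSS big_distrr; congr (_ + _); apply: eq_bigr => k _.
have kn : k <= n by rewrite -ltnS.
by rewrite !subSn ?(leqW kn) // ncode_rec mulnCA.
Qed.

Lemma card_E n : #|[set t : n.-tuple L | `[< in_E t >]]| = ncode n.
Proof.
rewrite /ncode -card_tuples_count; apply: eq_card => t.
by rewrite !inE (asbool_equiv_eq (in_E_code_word _)) asboolb.
Qed.

End Words.

Local Open Scope ring_scope.

(* (1 - 2e)^2 = 1 - 4e + 4e^2, and e^2 = e - c z^2. *)
Lemma quadratic_fps_sqr (c : rat) (e : fps) :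
  (forall n, e n = c * (n == 2%N)%:R + fps_mul e e n) ->
  let s : fps := fun n => (n == 0%N)%:R - 2 * e n in
  forall n, fps_mul s s n = (n == 0%N)%:R - 4 * c * (n == 2%N)%:R.
Proof.
move=> e_rec s n; rewrite /fps_mul.
have delta_l (t : fps) : \sum_(k < n.+1) (k == 0%N :> nat)%:R * t (n - k)%N = t n.
  by rewrite big_ord_recl subn0 mul1r big1 ?addr0 // => k _; rewrite mul0r.
have delta_r (t : fps) : \sum_(k < n.+1) t k * ((n - k)%N == 0%N)%:R = t n.
  rewrite big_ord_recr /= subnn mulr1 big1 ?add0r // => k _.
  by rewrite subn_eq0 leqNgt ltn_ord mulr0.
have -> : \sum_(k < n.+1) s k * s (n - k)%N =
    \sum_(k < n.+1) (k == 0%N :> nat)%:R * s (n - k)%N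
    - 2 * \sum_(k < n.+1) e k * ((n - k)%N == 0%N)%:R + 4 * fps_mul e e n.
  rewrite /fps_mul !mulr_sumr -sumrB -big_split; apply: eq_bigr => k _ /=; rewrite /s; ring.
by rewrite delta_l delta_r /s (e_rec n); ring.
Qed.

Theorem lemma3p2 (M : nat) :
  exists s : fps,
    [/\ s 0%N = 1,
        (forall n, fps_mul s s n = one_minus_8Mz2 M n) &
        (forall n, genfun_E M n = 2^-1 * ((n == 0%N)%:R - s n))].
Proof.
pose e : fps := fun n => (ncode M n)%:R.
have e_rec n : e n = (2 * M)%:R * (n == 2%N)%:R + fps_mul e e n.
  rewrite /e ncode_conv natrD !natrM natr_sum; congr (_ + _).
  by apply: eq_bigr => k _; rewrite natrM.
exists (fun n => (n == 0%N)%:R - 2 * e n); split.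
- by rewrite /e ncode_lt2 // subr0.
- move=> n; rewrite (quadratic_fps_sqr e_rec) /one_minus_8Mz2.
  by case: n => [|[|[|n]]] /=; rewrite ?natrM; ring.
- by move=> n; rewrite /genfun_E card_E /e; field.
Qed.
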